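(* Let $C$ be a small category and $D$ any category. If a functor $F:\Delta/C\to D$ carries every surjection into an isomorphism, then $F$ factors as $\Delta/C\to[\Delta/C]\xrightarrow{G}D$ for a unique functor $G$, where $\Delta/C\to[\Delta/C]$ is the quotient functor $\xi_*\mapsto[\xi_*]$. Thus $[\Delta/C]$ is the localization of $\Delta/C$ at the surjections.
   Context: For $q\ge0$, $[q]=\{0<\dots<q\}$ viewed as a category. A $q$-simplex of the nerve $NC$ is a functor $X:[q]\to C$; write $q_X=q$. The category $\Delta/C$ has all simplices of $NC$ as objects and as morphisms $X\to Y$ the order-preserving $\xi:[q_X]\to[q_Y]$ with $Y\circ\xi=X$, written $\xi_*$. Such a morphism is a surjection if $\xi$ is surjective. For a $q$-simplex $X$ and a surjective order-preserving $s:[q+1]\to[q]$ with its two order-preserving right inverses $d,d':[q]\to[q+1]$, the morphisms $d_*,d'_*:X\to X\circ s$ are elementary equivalent. $\sim$ is the smallest equivalence relation on morphisms of $\Delta/C$ compatible with composition and containing all elementary equivalent pairs; $[\Delta/C]$ is the quotient category with the same objects and morphisms the classes $[\xi_*]$. *)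

From mathcomp Require Import all_boot.
Set Implicit Arguments. Unset Strict Implicit. Unset Printing Implicit Defensive.

(* cmp g f is "g after f". *)
Record Cat := {
  ob : Type;
  hom : ob -> ob -> Type;
  idm : forall a, hom a a;
  cmp : forall a b c, hom b c -> hom a b -> hom a c;
  comp_idl : forall a b (f : hom a b), cmp (idm b) f = f;
  comp_idr : forall a b (f : hom a b), cmp f (idm a) = f;
  comp_assoc : forall a b c d (h : hom c d) (g : hom b c) (f : hom a b),
      cmp h (cmp g f) = cmp (cmp h g) f
}.
Arguments idm {_} _.
Arguments cmp {_ _ _ _} _ _.
Arguments hom {_} _ _.

Definition is_iso (D : Cat) (a b : ob D) (f : hom a b) : Prop :=
  exists g : hom b a, cmp g f = idm a /\ cmp f g = idm b.

(* [q] = {0 < ... < q} is 'I_q.+1 ; there is one arrow i -> j iff i <= j. *)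
Record diag (C : Cat) (q : nat) := {
  dob : 'I_q.+1 -> ob C;
  darr : forall i j : 'I_q.+1, i <= j -> hom (dob i) (dob j);
  darr_id : forall (i : 'I_q.+1) (h : i <= i), darr h = idm (dob i);
  darr_comp : forall (i j k : 'I_q.+1) (hij : i <= j) (hjk : j <= k) (hik : i <= k),
      darr hik = cmp (darr hjk) (darr hij)
}.

(* an arrow of C together with its endpoints (to compare arrows with
   possibly different endpoints) *)
Definition tarr (C : Cat) q (X : diag C q) (i j : 'I_q.+1) (h : i <= j)
  : {ab : ob C * ob C & hom ab.1 ab.2} :=
  existT (fun ab : ob C * ob C => hom ab.1 ab.2) (dob X i, dob X j) (darr X h).

Definition simplex (C : Cat) := {q : nat & diag C q}.
Definition qdim (C : Cat) (X : simplex C) : nat := projT1 X.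

(* Y o s = X, for s : [q_X] -> [q_Y] order preserving: as functors,
   i.e. equality of every arrow (with its endpoints). *)
Definition precomp_eq (C : Cat) (X Y : simplex C)
  (s : 'I_(qdim X).+1 -> 'I_(qdim Y).+1) : Prop :=
  forall (i j : 'I_(qdim X).+1) (h : i <= j) (h' : s i <= s j),
    tarr (projT2 Y) h' = tarr (projT2 X) h.
Arguments precomp_eq {C} X Y s.

Record dhom (C : Cat) (X Y : simplex C) := {
  xi : 'I_(qdim X).+1 -> 'I_(qdim Y).+1;
  xi_mono : forall i j : 'I_(qdim X).+1, i <= j -> xi i <= xi j;
  xi_comm : precomp_eq X Y xi
}.

Lemma did_comm (C : Cat) (X : simplex C) : precomp_eq X X id.
Proof. by move=> i j h h'; rewrite (bool_irrelevance h' h). Qed.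

Definition did (C : Cat) (X : simplex C) : dhom X X :=
  @Build_dhom C X X id (fun i j h => h) (@did_comm C X).

Lemma dcomp_comm (C : Cat) (X Y Z : simplex C) (g : dhom Y Z) (f : dhom X Y) :
  precomp_eq X Z (fun i => xi g (xi f i)).
Proof.
move=> i j h h'.
by rewrite (@xi_comm _ _ _ g _ _ (xi_mono f h) h') (@xi_comm _ _ _ f _ _ h).
Qed.

Definition dcomp (C : Cat) (X Y Z : simplex C) (g : dhom Y Z) (f : dhom X Y)
  : dhom X Z :=
  @Build_dhom C X Z (fun i => xi g (xi f i))
    (fun i j h => @xi_mono _ _ _ g _ _ (@xi_mono _ _ _ f _ _ h)) (@dcomp_comm C X Y Z g f).

Definition dsurj (C : Cat) (X Y : simplex C) (f : dhom X Y) : Prop :=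
  forall k, exists i, xi f i = k.

(* Elementary equivalence: Y = X o s for a surjective order preserving
   s : [q+1] -> [q] (q = q_X), and f = d_*, g = d'_* for order preserving
   right inverses d, d' of s. *)
Definition elem (C : Cat) (X Y : simplex C) (f g : dhom X Y) : Prop :=
  qdim Y = (qdim X).+1 /\
  exists s : 'I_(qdim Y).+1 -> 'I_(qdim X).+1,
    (forall i j : 'I_(qdim Y).+1, i <= j -> s i <= s j) /\
    (forall k, exists i, s i = k) /\
    precomp_eq Y X s /\
    cancel (xi f) s /\ cancel (xi g) s.

Inductive sim (C : Cat) : forall X Y : simplex C, dhom X Y -> dhom X Y -> Prop :=
| sim_elem X Y (f g : dhom X Y) : elem f g -> sim f g
| sim_refl X Y (f : dhom X Y) : sim f f
| sim_sym X Y (f g : dhom X Y) : sim f g -> sim g f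
| sim_trans X Y (f g h : dhom X Y) : sim f g -> sim g h -> sim f h
| sim_compl X Y Z (h : dhom Y Z) (f f' : dhom X Y) :
    sim f f' -> sim (dcomp h f) (dcomp h f')
| sim_compr X Y Z (g g' : dhom Y Z) (h : dhom X Y) :
    sim g g' -> sim (dcomp g h) (dcomp g' h).

(* morphisms of [Delta/C]: equivalence classes [xi_*] *)
Definition qhom (C : Cat) (X Y : simplex C) :=
  {P : dhom X Y -> Prop | exists f, P = sim f}.

Definition cls (C : Cat) (X Y : simplex C) (f : dhom X Y) : qhom X Y :=
  exist (fun P => exists f, P = sim f) (sim f) (ex_intro _ f erefl).

Record DFunctor (C D : Cat) := {
  Fo : simplex C -> ob D;
  Fm : forall X Y, dhom X Y -> hom (Fo X) (Fo Y);
  Fm_id : forall X, Fm (did X) = idm (Fo X);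
  Fm_comp : forall X Y Z (g : dhom Y Z) (f : dhom X Y),
      Fm (dcomp g f) = cmp (Fm g) (Fm f)
}.

(** If [d_*, d'_* : X -> X o s] are elementary
    equivalent, then [s_*] is a surjection with [s_* d_* = s_* d'_* = id], and
    [F s_*] is an isomorphism, hence monic; so [F d_* = F d'_*]. As the kernel
    of [F] is an equivalence relation compatible with composition, it contains
    [~], and [F] descends to the quotient. Uniqueness holds because every
    morphism of [[Delta/C]] is a class [[xi_*]]. *)

From mathcomp Require Import all_boot.
From Stdlib Require Import ProofIrrelevance FunctionalExtensionality ClassicalEpsilon.

Lemma iso_monic (D : Cat) (a b c : ob D) (s : hom b c) (f g : hom a b) :
  is_iso s -> cmp s f = cmp s g -> f = g.
Proof.
move=> [t [ts _]] Esfg.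
by rewrite -[f]comp_idl -[g]comp_idl -ts -!comp_assoc Esfg.
Qed.

Lemma dhom_eq (C : Cat) (X Y : simplex C) (f g : dhom X Y) :
  xi f =1 xi g -> f = g.
Proof.
case: f => xf mf cf; case: g => xg mg cg /= /functional_extensionality Exfg.
subst xg.
by rewrite (proof_irrelevance _ mf mg) (proof_irrelevance _ cf cg).
Qed.

Lemma cls_surj {C : Cat} {X Y : simplex C} (P : qhom X Y) :
  exists f : dhom X Y, P = cls f.
Proof.
case: P => P Pcls; have [f Ef] := Pcls; subst P; exists f.
by rewrite /cls (proof_irrelevance _ Pcls (ex_intro _ f erefl)).
Qed.

Section Descent.

Variables (C D : Cat) (F : DFunctor C D).
Hypothesis Fsurj : forall (X Y : simplex C) (f : dhom X Y),
  dsurj f -> is_iso (Fm F f).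

Lemma Fm_elem (X Y : simplex C) (f g : dhom X Y) :
  elem f g -> Fm F f = Fm F g.
Proof.
move=> [_ [s [s_mono [s_surj [s_comm [fK gK]]]]]].
pose s_ := @Build_dhom C Y X s s_mono s_comm.
have sfK : dcomp s_ f = did X by apply: dhom_eq => i; apply: fK.
have sgK : dcomp s_ g = did X by apply: dhom_eq => i; apply: gK.
apply: (@iso_monic D _ _ _ (Fm F s_)); first exact: Fsurj.
by rewrite -!Fm_comp sfK sgK.
Qed.

Lemma Fm_sim (X Y : simplex C) (f g : dhom X Y) : sim f g -> Fm F f = Fm F g.
Proof.
elim=> {X Y f g}.
- by move=> X Y f g /Fm_elem.
- by [].
- by move=> X Y f g _ ->.
- by move=> X Y f g h _ -> _ ->.
- by move=> X Y Z h f f' _ Ef; rewrite !Fm_comp Ef.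
- by move=> X Y Z g g' h _ Eg; rewrite !Fm_comp Eg.
Qed.

Definition qlift {X Y : simplex C} (P : qhom X Y) : hom (Fo F X) (Fo F Y) :=
  Fm F (proj1_sig (constructive_indefinite_description _ (proj2_sig P))).

Lemma qlift_cls (X Y : simplex C) (f : dhom X Y) : qlift (cls f) = Fm F f.
Proof.
rewrite /qlift; case: constructive_indefinite_description => g /= Eg.
by apply: Fm_sim; apply: sim_sym; rewrite Eg; apply: sim_refl.
Qed.

End Descent.

Arguments qlift {C D} F {X Y} P.

Lemma qhom_fun_eq (C : Cat) (R : simplex C -> simplex C -> Type)
    (G G' : forall X Y : simplex C, qhom X Y -> R X Y) :
  (forall X Y (f : dhom X Y), G X Y (cls f) = G' X Y (cls f)) -> G = G'.
Proof.
move=> EGG'; apply: functional_extensionality_dep => X.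
apply: functional_extensionality_dep => Y; apply: functional_extensionality => P.
by have [f ->] := cls_surj P.
Qed.

Theorem lemma18 (C D : Cat) (F : DFunctor C D)
  (Fsurj : forall (X Y : simplex C) (f : dhom X Y), dsurj f -> is_iso (Fm F f)) :
  exists! G : forall X Y : simplex C, qhom X Y -> hom (Fo F X) (Fo F Y),
    (forall X : simplex C, G X X (cls (did X)) = idm (Fo F X)) /\
    (forall (X Y Z : simplex C) (g : dhom Y Z) (f : dhom X Y),
        G X Z (cls (dcomp g f)) = cmp (G Y Z (cls g)) (G X Y (cls f))) /\
    (forall (X Y : simplex C) (f : dhom X Y), G X Y (cls f) = Fm F f).
Proof.
have liftE := @qlift_cls C D F Fsurj.
exists (@qlift C D F); split.
  split; first by move=> X; rewrite liftE Fm_id.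
  split; last exact: liftE.
  by move=> X Y Z g f; rewrite !liftE Fm_comp.
move=> G [_ [_ GE]]; apply: qhom_fun_eq => X Y f.
by rewrite liftE GE.
Qed.
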